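(* Let $\mathcal{P}$ be a family of probability distributions on a domain $\mathcal{X}$, let $\theta:\mathcal{P}\to\Theta\subset\mathbb{R}$, let $\alpha\in[0,1]$ and $t:\mathbb{N}\to\mathbb{R}_+$. Suppose $\{P_v\}_{v\in\mathcal{V}}\subset\mathcal{P}$ is a sub-family indexed by $\mathcal{V}=\{0,1\}^\infty$ with parameter separation $\{\delta_k\}_{k\in\mathbb{N}}$, i.e. for all $k\in\mathbb{N}$ and all $v,v'\in\mathcal{V}$ with $v_{1:k}\neq v'_{1:k}$ we have $\delta_k\le|\theta(P_v)-\theta(P_{v'})|$. Suppose $\{\hat\theta_n\}_{n\in\mathbb{N}}$ is an $(\alpha,t(\cdot))$-estimator. Then, for $n_k=\inf\{n: t(n)<\delta_k/2\}$, there exists an $(\alpha,\{n_k\})$-test for the family $\{P_v\}_{v\in\mathcal{V}}$.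
   Context: For $v\in\mathcal{V}=\{0,1\}^\infty$ and $k\le l$, $v_{k:l}=(v_k,\dots,v_l)$. Observations $X_1,X_2,\dots$ are i.i.d. from a distribution $P$; an estimator sequence $\{\hat\theta_n\}$ consists of functions $\hat\theta_n(X_{1:n})$. It is an $(\alpha,t(\cdot))$-estimator if for all $P\in\mathcal{P}$, $\mathbb{P}_{X_i\sim P\text{ i.i.d.}}\big(|\hat\theta_n(X_{1:n})-\theta(P)|\le t(n)\text{ for all }n\in\mathbb{N}\big)\ge1-\alpha$. For a family $\{P_v\}_{v\in\mathcal{V}}$, let $\mathbb{P}_v$ denote the probability under which $X_1,X_2,\dots$ are i.i.d. $P_v$. A sequence of $\{0,1\}$-valued randomized tests $\{\hat V_k\}_{k\in\mathbb{N}}$, with $\hat V_k$ a (randomized) function of $X_{1:n_k}$, is an $(\alpha,\{n_k\})$-test if for all $v\in\mathcal{V}$, $\mathbb{P}_v(\hat V_k(X_{1:n_k})=v_k\text{ for all }k\in\mathbb{N})\ge1-\alpha$. *)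

From HB Require Import structures.
From mathcomp Require Import all_boot all_order all_algebra.
From mathcomp Require Import all_classical all_reals all_analysis.
Set Implicit Arguments. Unset Strict Implicit. Unset Printing Implicit Defensive.
Import Order.TTheory GRing.Theory Num.Theory.
Local Open Scope classical_set_scope.
Local Open Scope ring_scope.

(* Indexing conventions: a sample X_1, X_2, ... is a sequence [Xs : nat -> _]
   with paper X_j = Xs (j-1); the prefix X_{1:n} is the n-tuple
   [tuple Xs i w | i < n].  Likewise v in V = {0,1}^oo is [v : nat -> bool]
   with paper v_j = v (j-1). *)

Section defs.
Context {R : realType} {dX : measure_display} {X : measurableType dX}.

Definition sample {T : Type} (Xs : nat -> T -> X) (n : nat) (w : T) : n.-tuple X :=
  [tuple Xs i w | i < n].

(* Under mu, the X_i are i.i.d. with law P (mutual independence of the whole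
   sequence = product rule for every finite initial segment). *)
Definition iid_seq {dO : measure_display} {O : measurableType dO}
  (mu : probability O R) (Xs : nat -> O -> X) (P : probability X R) : Prop :=
  (forall i, measurable_fun setT (Xs i)) /\
  forall (n : nat) (A : nat -> set X), (forall i, measurable (A i)) ->
    mu (\bigcap_(i in `I_n) (Xs i @^-1` A i)) = (\prod_(i < n) P (A i))%E.

Definition iid_seq_aux {dO : measure_display} {O : measurableType dO}
  {dW : measure_display} {W : measurableType dW}
  (mu : probability O R) (Xs : nat -> O -> X) (P : probability X R)
  (U : O -> W) (nu : probability W R) : Prop :=
  (forall i, measurable_fun setT (Xs i)) /\ measurable_fun setT U /\
  forall (n : nat) (A : nat -> set X) (B : set W),
    (forall i, measurable (A i)) -> measurable B ->
    mu ((\bigcap_(i in `I_n) (Xs i @^-1` A i)) `&` (U @^-1` B))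
      = ((\prod_(i < n) P (A i)) * nu B)%E.

Definition is_estimator (PP : set (probability X R))
  (theta : probability X R -> R) (alpha : R) (t : nat -> R)
  (theta_hat : forall n : nat, n.-tuple X -> R) : Prop :=
  (forall n, measurable_fun setT (theta_hat n)) /\
  forall P, PP P ->
  forall (dO : measure_display) (O : measurableType dO) (mu : probability O R)
         (Xs : nat -> O -> X), iid_seq mu Xs P ->
    ((1 - alpha)%:E <=
     mu [set w | forall n, (0 < n)%N ->
                 (`|theta_hat n (sample Xs n w) - theta P| <= t n)%R])%E.

Definition prefix_ne (v v' : nat -> bool) (k : nat) : Prop :=
  exists i, (i < k)%N /\ v i <> v' i.

Definition param_separation (theta : probability X R -> R)
  (Pv : (nat -> bool) -> probability X R) (delta : nat -> R) : Prop :=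
  forall k, (0 < k)%N -> forall v v', prefix_ne v v' k ->
    delta k <= `|theta (Pv v) - theta (Pv v')|.

(* m = inf { n in N : t(n) < d }  (N = {1,2,...}); only satisfiable when
   this set is nonempty *)
Definition is_inf_index (t : nat -> R) (d : R) (m : nat) : Prop :=
  [/\ (0 < m)%N, t m < d & forall m', (0 < m')%N -> t m' < d -> (m <= m')%N].

Definition is_test {dW : measure_display} {W : measurableType dW}
  (Pv : (nat -> bool) -> probability X R) (alpha : R) (nk : nat -> nat)
  (nu : probability W R) (V : forall k : nat, (nk k).-tuple X * W -> bool)
  : Prop :=
  (forall k, measurable (V k @^-1` [set true])) /\
  forall v : nat -> bool,
  forall (dO : measure_display) (O : measurableType dO) (mu : probability O R)
         (Xs : nat -> O -> X) (U : O -> W), iid_seq_aux mu Xs (Pv v) U nu ->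
    ((1 - alpha)%:E <=
     mu [set w | forall k, (0 < k)%N -> V k (sample Xs (nk k) w, U w) = v k.-1])%E.
End defs.

(** The test declares [v_k = 1] exactly when the estimate [theta_hat (n_k)] lies
   within [delta_k / 2] of some [theta(P_v')] with [v'_k = 1].  On the event
   where the estimator is [t(n)]-accurate for every [n], the estimate at [n_k]
   is within [t(n_k) < delta_k / 2] of [theta(P_v)]; since parameters of
   distributions whose labels differ at position [k] are [delta_k] apart, the
   [delta_k / 2]-balls around them are disjoint, so every decision is right and
   the test succeeds with probability at least [1 - alpha]. *)

From HB Require Import structures.
From mathcomp Require Import all_boot all_order all_algebra.
From mathcomp Require Import all_classical all_reals all_analysis.
From mathcomp Require Import measurable_realfun.
Import Order.TTheory GRing.Theory Num.Theory numFieldNormedType.Exports.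
Local Open Scope classical_set_scope.
Local Open Scope ring_scope.

Section label_region.
Context {R : realType} {I : Type}.
Variables (c : I -> R) (b : I -> bool).

Definition label_region (r : R) : set R :=
  \bigcup_(i in [set i | b i]) ball (c i) r.

Lemma open_label_region r : open (label_region r).
Proof. by apply: bigcup_open => i _; exact: ball_open. Qed.

Lemma label_regionP {d y : R} {i : I} :
  (forall j j', b j != b j' -> d <= `|c j - c j'|) ->
  `|y - c i| < d / 2 -> label_region (d / 2) y <-> b i.
Proof.
move=> sep yi; split; last by move=> bi; exists i => //; rewrite /ball /= distrC.
case=> j /= bj; rewrite /ball /= => yj; case bi: (b i) => //.
suff : `|c i - c j| < d by rewrite ltNge sep // bi bj.
rewrite -[c i](subrK y) -addrA (splitr d).
by apply: (le_lt_trans (ler_normD _ _)); rewrite distrC in yi; rewrite ltrD // distrC.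
Qed.

End label_region.

Lemma prefix_ne_last {v v' : nat -> bool} {k : nat} :
  (0 < k)%N -> v k.-1 != v' k.-1 -> prefix_ne v v' k.
Proof. by move=> k0 /eqP ne; exists k.-1; rewrite prednK. Qed.

Section measurable_events.
Context {d : measure_display} {T : measurableType d}.

Lemma measurable_bool_fiber {f : T -> bool} (b : bool) :
  measurable (f @^-1` [set true]) -> measurable [set x | f x = b].
Proof.
case: b => // mf; rewrite (_ : [set x | _] = ~` (f @^-1` [set true])).
  exact: measurableC.
by apply/seteqP; split => x /=; case: (f x).
Qed.

Lemma measurable_forall_pos (P : nat -> T -> Prop) :
  (forall k, measurable [set x | P k x]) ->
  measurable [set x | forall k, (0 < k)%N -> P k x].
Proof.
move=> mP; rewrite (_ : [set x | _] = \bigcap_(k in [set k | (0 < k)%N]) [set x | P k x]).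
  by apply: bigcap_measurableType => k _; exact: mP.
by apply/seteqP; split => x /= Px k /= k0; exact: Px.
Qed.

Lemma measurable_region_test {R : realType} {dW : measure_display}
  {W : measurableType dW} (est : T -> R) (S : set R) :
  measurable_fun setT est -> measurable S ->
  measurable ((fun xw : T * W => `[< S (est xw.1) >]) @^-1` [set true]).
Proof.
move=> mest mS; rewrite (_ : _ @^-1` _ = (est \o fst) @^-1` S).
  have mfst : measurable_fun [set: T * W] (est \o fst).
    by apply: measurableT_comp => //; exact: measurable_fst.
  by rewrite -[_ @^-1` _]setTI; exact: mfst.
by apply/seteqP; split => xw /asboolP.
Qed.

End measurable_events.

Section sampling.
Context {R : realType} {dX : measure_display} {X : measurableType dX}
  {dO : measure_display} {O : measurableType dO}.

Lemma measurable_sample (Xs : nat -> O -> X) n :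
  (forall i, measurable_fun setT (Xs i)) -> measurable_fun setT (sample Xs n).
Proof.
move=> mX; apply/measurable_fun_tnthP => i.
rewrite (_ : (fun x => tnth x i) \o _ = Xs i) //.
by apply: funext => w /=; rewrite /sample tnth_mktuple.
Qed.

Lemma iid_seq_aux_iid {dW : measure_display} {W : measurableType dW}
  {mu : probability O R} {Xs : nat -> O -> X} {P : probability X R}
  {U : O -> W} {nu : probability W R} :
  iid_seq_aux mu Xs P U nu -> iid_seq mu Xs P.
Proof.
move=> [mX [_ prod]]; split => // n A mA.
by have := prod n A setT mA measurableT; rewrite preimage_setT setIT probability_setT mule1.
Qed.

Lemma measurable_accuracy_event (Xs : nat -> O -> X)
  (est : forall n : nat, n.-tuple X -> R) (th : R) (t : nat -> R) :
  (forall i, measurable_fun setT (Xs i)) ->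
  (forall n, measurable_fun setT (est n)) ->
  measurable [set w | forall n, (0 < n)%N -> `|est n (sample Xs n w) - th| <= t n].
Proof.
move=> mX mest; apply: measurable_forall_pos => n.
have mdev : measurable_fun setT (fun w => `|est n (sample Xs n w) - th|).
  apply: measurableT_comp; first exact: normr_measurable.
  apply: measurable_funB => //; apply: measurableT_comp (mest n) _.
  exact: measurable_sample.
have := mdev measurableT _ (@measurable_itv _ `]-oo, t n]).
by rewrite setTI; congr measurable; apply/seteqP; split => w /=; rewrite in_itv.
Qed.

End sampling.

Theorem proposition1 (R : realType) (dX : measure_display) (X : measurableType dX)
  (PP : set (probability X R)) (theta : probability X R -> R)
  (alpha : R) (t : nat -> R)
  (Pv : (nat -> bool) -> probability X R) (delta : nat -> R)
  (theta_hat : forall n : nat, n.-tuple X -> R) (nk : nat -> nat) :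
  0 <= alpha <= 1 ->
  (forall n, (0 < n)%N -> 0 <= t n) ->
  (forall v, PP (Pv v)) ->
  param_separation theta Pv delta ->
  is_estimator PP theta alpha t theta_hat ->
  (forall k, (0 < k)%N -> is_inf_index t (delta k / 2) (nk k)) ->
  exists (dW : measure_display) (W : measurableType dW) (nu : probability W R)
         (V : forall k : nat, (nk k).-tuple X * W -> bool),
    @is_test R dX X dW W Pv alpha nk nu V.
Proof.
move=> _ _ PPv sep [mth est] ninf.
pose region k := label_region (fun v => theta (Pv v)) (fun v => v k.-1) (delta k / 2).
pose V k (xw : (nk k).-tuple X * X) := `[< region k (theta_hat (nk k) xw.1) >].
have mV k : measurable (V k @^-1` [set true]).
  apply: (measurable_region_test _ _ (mth _)); apply: open_measurable.
  exact: open_label_region.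
(* The test ignores its auxiliary randomization, so any law serves for it. *)
exists dX, X, (Pv (fun _ => false)), V; split => // v dO O mu Xs U iidU.
have [mX [mU _]] := iidU.
apply: (le_trans (est _ (PPv v) _ _ mu Xs (iid_seq_aux_iid iidU))).
apply: le_measure; rewrite ?inE.
- exact: measurable_accuracy_event.
- apply: measurable_forall_pos => k.
  have mpair : measurable_fun setT (fun w => (sample Xs (nk k) w, U w)).
    by apply: measurable_fun_pair => //; exact: measurable_sample.
  by have := mpair measurableT _ (measurable_bool_fiber (v k.-1) (mV k)); rewrite setTI.
- move=> w accurate k k0 /=; have [nk0 tlt _] := ninf k k0.
  have sep_k v1 v2 : v1 k.-1 != v2 k.-1 -> delta k <= `|theta (Pv v1) - theta (Pv v2)|.
    by move/(prefix_ne_last k0); exact: sep.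
  have decide := @label_regionP _ _ (fun v => theta (Pv v)) (fun v => v k.-1)
    _ _ _ sep_k (le_lt_trans (accurate _ nk0) tlt).
  exact: asbool_equiv_eqP idP decide.
Qed.
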